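(* Let $X$ be a topological space, for each $x\in X$ let $\mathcal B_x$ be a local base at $x$, and let $A$ be a finitely non-Hausdorff subset of $X$. Then $\bigcap_{x\in A}\bigcap\{\overline{B}:B\in\mathcal B_x\}=\bigcap_{x\in A}\bigcup\{M: M$ is a finitely non-Hausdorff subset of $X$ with $x\in M\}$, and this set also equals $\bigcap_{x\in A}\bigcup\{M: M$ is a maximal finitely non-Hausdorff subset of $X$ with $x\in M\}$.
   Context: A non-empty subset $A$ of a topological space $X$ is called finitely non-Hausdorff if for every non-empty finite subset $F\subseteq A$ and every family $\{U_y:y\in F\}$ where each $U_y$ is an open neighborhood of $y$, we have $\bigcap_{y\in F}U_y\neq\emptyset$. It is maximal finitely non-Hausdorff if no finitely non-Hausdorff subset of $X$ properly contains it. *)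

From mathcomp Require Import all_boot all_order.
From mathcomp Require Import all_classical topology.
Set Implicit Arguments. Unset Strict Implicit. Unset Printing Implicit Defensive.
Local Open Scope classical_set_scope.

Definition local_base (T : topologicalType) (x : T) (B : set_system T) : Prop :=
  (forall b, B b -> open b /\ b x) /\
  (forall U, open U -> U x -> exists2 b, B b & b `<=` U).

Definition fin_nonHausdorff (T : topologicalType) (A : set T) : Prop :=
  A !=set0 /\
  forall (F : set T), finite_set F -> F !=set0 -> F `<=` A ->
  forall (U : T -> set T), (forall y, F y -> open (U y) /\ U y y) ->
  (\bigcap_(y in F) U y) !=set0.

Definition max_fin_nonHausdorff (T : topologicalType) (A : set T) : Prop :=
  fin_nonHausdorff A /\
  forall M : set T, fin_nonHausdorff M -> A `<=` M -> M = A.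

(* Two points x and z lie in a common finitely non-Hausdorff set iff every
   neighbourhood of x meets every neighbourhood of z: one direction uses the
   pair {x, z} as the finite subset, the other uses {x, z} itself as the
   witness. For a local base at x this says that z lies in the closure of
   every basic neighbourhood of x. Finite non-Hausdorffness only involves
   finite subsets, so it passes to unions of chains, and Zorn's lemma extends
   every finitely non-Hausdorff set to a maximal one. *)
From mathcomp Require Import all_boot all_order.
From mathcomp Require Import all_classical topology.
Set Implicit Arguments. Unset Strict Implicit. Unset Printing Implicit Defensive.
Local Open Scope classical_set_scope.

Lemma finite_sub_chain_bigcup {T : eqType} (F : set (set T)) (G : set T) :
  total_on F subset -> finite_set G -> G `<=` \bigcup_(X in F) X ->
  G = set0 \/ exists2 X, F X & G `<=` X.
Proof.
move=> totF /finite_seqP[s ->] {G}; elim: s => [|a s IH] sF.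
  by left; rewrite set_nil.
have [Y FY Ya] : (\bigcup_(X in F) X) a by apply: sF; rewrite /= inE eqxx.
have sF' : [set` s] `<=` \bigcup_(X in F) X.
  by move=> y ys; apply: sF; rewrite /= inE ys orbT.
right; case: (IH sF') => [s0|[X FX sX]].
  exists Y => // y /=; rewrite inE => /orP[/eqP -> //|ys].
  by have : [set` s] y by []; rewrite s0.
have [XY|YX] := totF _ _ FX FY.
  by exists Y => // y /=; rewrite inE => /orP[/eqP -> //|/sX/XY].
by exists X => // y /=; rewrite inE => /orP[/eqP ->|/sX]; first exact: YX.
Qed.

Section FinitelyNonHausdorff.
Variable T : topologicalType.

Definition inseparable (x z : T) : Prop :=
  forall U V : set T, open U -> U x -> open V -> V z -> U `&` V !=set0.

Lemma local_base_closureP (B : set_system T) (x z : T) : local_base x B ->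
  (forall b, B b -> closure b z) <-> inseparable x z.
Proof.
move=> [B_open B_sub]; split.
  move=> zB U V oU Ux oV Vz.
  have [b Bb bU] := B_sub U oU Ux.
  have [w [bw Vw]] := zB b Bb V (open_nbhs_nbhs (conj oV Vz)).
  by exists w; split => //; apply: bU.
move=> xz b Bb W; rewrite nbhsE => -[V [oV Vz] VW].
have [ob bx] := B_open b Bb.
have [w [bw Vw]] := xz b V ob bx oV Vz.
by exists w; split => //; apply: VW.
Qed.

Lemma fin_nonHausdorff_inseparable (M : set T) (x z : T) :
  fin_nonHausdorff M -> M x -> M z -> inseparable x z.
Proof.
move=> [_ fipM] Mx Mz U V oU Ux oV Vz.
pose W y := if pselect (y = x) then U else V.
have Wx : W x = U by rewrite /W; case: pselect.
have [zx|zx] := pselect (z = x); first by subst z; exists x.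
have Wz : W z = V by rewrite /W; case: pselect.
have W_nbhs y : [set x; z] y -> open (W y) /\ W y y.
  by move=> [->|->]; [rewrite Wx | rewrite Wz].
have xzM : [set x; z] `<=` M by move=> y [->|->].
have [w Ww] := fipM _ (finite_set2 x z) (ex_intro _ x (or_introl erefl)) xzM W W_nbhs.
by exists w; split; [rewrite -Wx; apply: Ww; left | rewrite -Wz; apply: Ww; right].
Qed.

Lemma inseparable_fin_nonHausdorff2 (x z : T) :
  inseparable x z -> fin_nonHausdorff [set x; z].
Proof.
move=> xz; split=> [|F _ _ F_xz U U_nbhs]; first by exists x; left.
have shrink y : exists W, [/\ open W, W y & F y -> W `<=` U y].
  have [Fy|nFy] := pselect (F y).
    by have [oU Uy] := U_nbhs y Fy; exists (U y); split=> // _.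
  by exists setT; split=> //; exact: openT.
have [Wx [oWx Wxx WxU]] := shrink x.
have [Wz [oWz Wzz WzU]] := shrink z.
have [w [Wxw Wzw]] := xz Wx Wz oWx Wxx oWz Wzz.
by exists w => y Fy; case: (F_xz y Fy) => ey; rewrite ey in Fy *;
  [apply: WxU | apply: WzU].
Qed.

(* The second clause of [fin_nonHausdorff]; unlike the first, it is inherited
   by subsets. *)
Definition nbhs_fip (X : set T) : Prop :=
  forall F : set T, finite_set F -> F !=set0 -> F `<=` X ->
  forall U : T -> set T, (forall y, F y -> open (U y) /\ U y y) ->
  \bigcap_(y in F) U y !=set0.

Lemma nbhs_fipS (X Y : set T) : X `<=` Y -> nbhs_fip Y -> nbhs_fip X.
Proof. by move=> XY fipY F fF F0 FX; apply: fipY => // y /FX /XY. Qed.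

Lemma nbhs_fip_chain (C : set (set T)) (M0 : set T) :
  total_on C subset -> nbhs_fip M0 -> (forall X, C X -> nbhs_fip (X `|` M0)) ->
  nbhs_fip ((\bigcup_(X in C) X) `|` M0).
Proof.
move=> totC fip0 fipC F fF F0 F_sub.
have [FC0|[X CX FCX]] :=
  finite_sub_chain_bigcup totC (finite_setIl _ fF) (@subIsetr _ F _).
  apply: fip0 => // y Fy; case: (F_sub y Fy) => // Cy.
  by have : (F `&` \bigcup_(X in C) X) y by []; rewrite FC0.
apply: (fipC X CX) => // y Fy; case: (F_sub y Fy) => [Cy|M0y]; last by right.
by left; apply: FCX.
Qed.

Lemma fin_nonHausdorff_maximal_extension (M0 : set T) :
  fin_nonHausdorff M0 -> exists2 M, max_fin_nonHausdorff M & M0 `<=` M.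
Proof.
move=> [M0_neq0 fip0].
(* Zorn is applied to the sets [A] with [nbhs_fip (A `|` M0)] rather than to
   supersets of [M0], so that the union of the empty chain is admissible. *)
have [A [fipA A_max]] : exists A, nbhs_fip (A `|` M0) /\
    forall B, A `<` B -> ~ nbhs_fip (B `|` M0).
  by apply: Zorn_bigcup => C fipC totC; apply: nbhs_fip_chain.
exists (A `|` M0) => [|y]; last by right.
split=> [|N [_ fipN] AM0N]; first by split=> //; apply: subset_nonempty M0_neq0.
have AN : A `<=` N by move=> y Ay; apply: AM0N; left.
have fipNM0 : nbhs_fip (N `|` M0).
  by apply: nbhs_fipS fipN => y [//|M0y]; apply: AM0N; right.
have NA : N `<=` A.
  by apply: contrapT => nNA; exact: (A_max N (conj AN nNA)).
by apply/seteqP; split=> [y /NA|//]; left.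
Qed.

End FinitelyNonHausdorff.

Theorem corollary2p10 (T : topologicalType) (Bx : T -> set_system T)
  (A : set T) :
  (forall x, local_base x (Bx x)) ->
  fin_nonHausdorff A ->
  (\bigcap_(x in A) \bigcap_(B in Bx x) closure B)
    = \bigcap_(x in A) \bigcup_(M in [set M : set T | fin_nonHausdorff M /\ M x]) M
  /\
  (\bigcap_(x in A) \bigcup_(M in [set M : set T | fin_nonHausdorff M /\ M x]) M)
    = \bigcap_(x in A) \bigcup_(M in [set M : set T | max_fin_nonHausdorff M /\ M x]) M.
Proof.
(* The identities hold for every [A]. *)
move=> Bx_base _; split; apply/seteqP; split=> z zA x Ax.
- have xz : inseparable x z by apply/(local_base_closureP _ (Bx_base x)); exact: zA.
  by exists [set x; z]; [split; [exact: inseparable_fin_nonHausdorff2 | left] | right].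
- have [M [fnhM Mx] Mz] := zA x Ax.
  apply/(local_base_closureP _ (Bx_base x)).
  exact: fin_nonHausdorff_inseparable fnhM Mx Mz.
- have [M [fnhM Mx] Mz] := zA x Ax.
  have [N maxN MN] := fin_nonHausdorff_maximal_extension fnhM.
  by exists N; [split=> //; apply: MN | apply: MN].
- by have [M [[fnhM _] Mx] Mz] := zA x Ax; exists M.
Qed.
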